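(* Let $P$ be a convex euclidean $p$-gon, and let $r\le p-1$ be the rank of the abelian group generated by the translations in the sides of $P$. Then the complexity $f(n)$ of the outer billiard about $P$ satisfies $f(n)\prec n^{r+2}$.
   Context: The translations in the sides of $P$ are the compositions $T_aT_b$ of point reflections $T_a(x)=2a-x$, $T_b(x)=2b-x$ in the endpoints $a,b$ of a side (translations by $2(a-b)$). Outer billiard: $X=\mathbb R^2\setminus P$ is partitioned by the rays extending the sides of $P$ (ray extending side $ab$ beyond $a$, vertices counterclockwise) into regions $X_a$ indexed by vertices ($X_a$ = points $x$ such that the line through $x$ and $a$ supports $P$ with $P$ on a fixed side); the map is $T=T_a$ on $X_a$. A point is regular if no iterate lies on the rays; its length-$n$ code is the word $a_1\cdots a_n$ with $T^{i-1}x\in X_{a_i}$; $f(n)$ is the number of distinct codes of length $n$. $g\prec h$ means $g(n)\le Ch(n)$ for some $C$ and all large $n$. *)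

From HB Require Import structures.
From mathcomp Require Import all_boot all_order all_algebra.
From mathcomp Require Import boolp reals.
Set Implicit Arguments. Unset Strict Implicit. Unset Printing Implicit Defensive.
Import Order.TTheory GRing.Theory Num.Theory.
Local Open Scope ring_scope.

Section OuterBilliard.
Variable R : realType.

Definition pt := (R * R)%type.
Definition psub (a b : pt) : pt := (a.1 - b.1, a.2 - b.2).
(* cross product: > 0 iff b is strictly to the left of a *)
Definition cross (a b : pt) : R := a.1 * b.2 - a.2 * b.1.
Definition prefl (a x : pt) : pt := (2 * a.1 - x.1, 2 * a.2 - x.2).

Definition nxt {p : nat} (i : 'I_p) : 'I_p :=
  Ordinal (ltn_pmod i.+1 (leq_ltn_trans (leq0n i) (ltn_ord i))).

Definition convex_ccw {p : nat} (v : 'I_p -> pt) : Prop :=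
  forall i j : 'I_p, j != i -> j != nxt i ->
    0 < cross (psub (v (nxt i)) (v i)) (psub (v j) (v i)).

(* X_a (with the singular rays removed): the line through x and the vertex a
   supports P, with P (except a) strictly on the left of the directed line
   x -> a.  Such x automatically lies outside P; the union of these open
   regions is the complement in R^2 \ P of the rays extending each side
   v_i v_{i+1} beyond v_i. *)
Definition inX {p : nat} (v : 'I_p -> pt) (a : 'I_p) (x : pt) : Prop :=
  forall b : 'I_p, b != a -> 0 < cross (psub (v a) x) (psub (v b) x).

Fixpoint orb {p : nat} (v : 'I_p -> pt) (x : pt) (s : nat -> 'I_p) (k : nat)
  : pt :=
  match k with
  | 0 => x
  | k'.+1 => prefl (v (s k')) (orb v x s k')
  end.

(* s is the (infinite) itinerary of x under the outer billiard map T: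
   T^k x lies in X_{s k} for all k.  A point x is regular iff it has such an
   itinerary (which is then unique, the X_a being disjoint). *)
Definition itinerary {p : nat} (v : 'I_p -> pt) (x : pt) (s : nat -> 'I_p)
  : Prop := forall k, inX v (s k) (orb v x s k).

Definition codes {p : nat} (v : 'I_p -> pt) (n : nat) : {set n.-tuple 'I_p} :=
  [set w : n.-tuple 'I_p |
     `[< exists (x : pt) (s : nat -> 'I_p),
           itinerary v x s /\ forall i : 'I_n, tnth w i = s i >]].

Definition complexity {p : nat} (v : 'I_p -> pt) (n : nat) : nat :=
  #|codes v n|.

(* translation in the side v_i v_{i+1}: T_{v_i} T_{v_{i+1}} = translation by
   2 (v_i - v_{i+1}) *)
Definition side_transl {p : nat} (v : 'I_p -> pt) (i : 'I_p) : pt :=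
  (2 * (v i).1 - 2 * (v (nxt i)).1, 2 * (v i).2 - 2 * (v (nxt i)).2).

Definition zindep {p : nat} (t : 'I_p -> pt) (S : {set 'I_p}) : Prop :=
  forall c : 'I_p -> int,
    \sum_(i in S) (c i)%:~R * (t i).1 = 0 ->
    \sum_(i in S) (c i)%:~R * (t i).2 = 0 ->
    forall i, i \in S -> c i = 0.

(* rank of the (torsion-free, finitely generated) abelian subgroup of R^2
   generated by the t_i = the maximal size of a Z-independent subfamily *)
Definition group_rank {p : nat} (t : 'I_p -> pt) : nat :=
  \max_(S : {set 'I_p} | `[< zindep t S >]) #|S|.

Definition transl_rank {p : nat} (v : 'I_p -> pt) : nat :=
  group_rank (side_transl v).

End OuterBilliard.

From HB Require Import structures.
From mathcomp Require Import all_boot all_order all_algebra.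
From mathcomp Require Import boolp reals.
From mathcomp Require Import ring lra zify.
Set Implicit Arguments. Unset Strict Implicit. Unset Printing Implicit Defensive.
Import Order.TTheory GRing.Theory Num.Theory.
Local Open Scope ring_scope.

(** The points following a code u for n steps form a convex cell on which T^n
    is affine.  If u has two extensions, T^n sends two points of the cell into
    different regions X_a, X_a', so some point of the cell lands on a line
    through v_a and another vertex.  Hence f(n+1) <= f(n) + p N_n, where N_n
    counts the codes whose cell meets one of these p^2 lines at time n.
    On such a line, parametrised by t, distinct codes reach disjoint sets of
    parameters, and going leftwards a code can only lose the line at a zero of
    one of the affine functions t |-> orient(T^k x_t), where x_t is the n-th
    preimage of the point t along the code.  Such a zero is determined by the
    translation part of T^(n-k), a combination of the side translations with
    integer coefficients at most n.  These translations span a lattice of rank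
    r, so there are O(n^r) zeros, N_n = O(n^r) and f(n) = O(n^(r+1)). *)

Section Plane.
Variable R : realType.
Implicit Types (x y w : pt R) (t : R).

Definition coord (i : bool) x : R := if i then x.2 else x.1.

Definition pshift y t w : pt R := (y.1 + t * w.1, y.2 + t * w.2).

Definition pscale t y : pt R := (t * y.1, t * y.2).

Lemma pt_coordP x y : (forall i, coord i x = coord i y) -> x = y.
Proof.
by case: x y => [x1 x2] [y1 y2] e; congr pair; [apply: e false | apply: e true].
Qed.

Lemma coord0 i : coord i (0, 0) = 0 :> R.
Proof. by case: i. Qed.

Lemma coord_psub i x y : coord i (psub x y) = coord i x - coord i y.
Proof. by case: i. Qed.

Lemma coord_prefl i x y : coord i (prefl x y) = 2 * coord i x - coord i y.
Proof. by case: i. Qed.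

Lemma coord_pshift i y t w : coord i (pshift y t w) = coord i y + t * coord i w.
Proof. by case: i. Qed.

Lemma coord_pscale i t y : coord i (pscale t y) = t * coord i y.
Proof. by case: i. Qed.

Lemma prefl_inj x : injective (prefl x).
Proof.
move=> y y' /(congr1 (coord _)) e; apply: pt_coordP => i.
by have := e i; rewrite !coord_prefl; lra.
Qed.

End Plane.

Lemma gt0_affine_left (R : realFieldType) (be al t t' : R) : t < t' ->
  0 < be + t' * al -> ~~ (t <= - be / al < t') -> 0 < be + t * al.
Proof.
move=> tt' pos' nozero; case: (ltgtP al 0) => [al_lt0|al_gt0|al0]; first nra.
- rewrite ltNge; apply: contra nozero => neg.
  by rewrite ler_pdivlMr // ltr_pdivrMr //; apply/andP; split; lra.
- by move: pos'; rewrite al0 !mulr0.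
Qed.

Lemma card_disjoint_left_closed (R : realDomainType) (T G : finType)
    (U : {set T}) (J : T -> R -> Prop) (cut : G -> R) :
  (forall u u' t, u \in U -> u' \in U -> J u t -> J u' t -> u = u') ->
  (forall u, u \in U -> exists t, J u t) ->
  (forall u t t', u \in U -> t < t' -> J u t' ->
     (forall g, ~~ (t <= cut g < t')) -> J u t) ->
  (#|U| <= #|G|.+1)%N.
Proof.
move=> disj nonempty left_closed.
have [pick pickP] : {pick : T -> R & forall u, u \in U -> J u (pick u)}.
  apply: (@choice T R (fun u t => u \in U -> J u t)) => u.
  by case: (boolP (u \in U)) => [/nonempty[t Jt]|_]; [exists t | exists 0].
pose below u := [set g | cut g < pick u].
have same_below u u' : u \in U -> u' \in U -> #|below u| = #|below u'| ->
    pick u < pick u' -> u = u'.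
  move=> uU u'U ecard lt.
  have sub : below u \subset below u'.
    by apply/subsetP => g; rewrite !inE => /lt_trans; apply.
  have ebelow : below u = below u' by apply/eqP; rewrite eqEcard sub ecard /=.
  apply: (disj u u' (pick u) uU u'U (pickP u uU)).
  apply: (left_closed u' _ (pick u') u'U lt (pickP u' u'U)) => g.
  apply/negP => /andP[le lt'].
  have : g \in below u' by rewrite inE.
  by rewrite -ebelow inE ltNge le.
have inj : {in U &, injective (fun u => inord #|below u| : 'I_#|G|.+1)}.
  move=> u u' uU u'U /(congr1 val) /=; rewrite !inordK ?ltnS ?max_card // => e.
  case: (ltgtP (pick u) (pick u')) => [lt|lt|epick].
  - exact: same_below.
  - exact/esym/same_below.
  - by apply: (disj u u' (pick u)) => //; [apply: pickP | rewrite epick; apply: pickP].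
by rewrite -[#|G|.+1]card_ord; apply: leq_card_in inj.
Qed.

Lemma card_bigcup_leq (I T : finType) (P : pred I) (F : I -> {set T}) :
  (#|\bigcup_(i | P i) F i| <= \sum_(i | P i) #|F i|)%N.
Proof.
elim/big_rec2: _ => [|i n A _ IH]; first by rewrite cards0.
exact: leq_trans (leq_card_setU _ _).1 (leq_add (leqnn _) IH).
Qed.

Lemma leq_pow_increments (g : nat -> nat) (K r : nat) :
  (forall n, g n.+1 <= g n + K * n.+1 ^ r)%N ->
  forall n, (g n <= g 0 + K * n ^ r.+1)%N.
Proof.
move=> step; elim=> [|n IH]; first by rewrite exp0n // muln0 addn0.
have pow : (n ^ r.+1 + n.+1 ^ r <= n.+1 ^ r.+1)%N.
  rewrite [X in (_ <= X)%N]expnS expnS mulSn addnC leq_add2l leq_mul2l.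
  by case: (r) => [|r']; rewrite ?expn0 ?leq_exp2r ?leqnSn ?orbT.
apply: leq_trans (step n) _; apply: leq_trans (leq_add IH (leqnn _)) _.
by rewrite -addnA leq_add2l -mulnDr leq_mul2l pow orbT.
Qed.

Section Billiard.
Variables (R : realType) (p : nat) (v : 'I_p -> pt R).
Implicit Types (a b c d : 'I_p) (x y z w : pt R) (s : nat -> 'I_p) (t l : R).

Definition orient a b y : R := cross (psub (v a) y) (psub (v b) y).

Definition line_pt a b t : pt R := pshift (v a) t (psub (v b) (v a)).

Lemma orientC a b y : orient b a y = - orient a b y.
Proof. rewrite /orient /cross /=; ring. Qed.

Lemma orient_pshift c d y t w :
  orient c d (pshift y t w) = orient c d y + t * cross (psub (v d) (v c)) w.
Proof. rewrite /orient /cross /=; ring. Qed.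

Lemma orient_back_line c d a b t (sg : R) y :
  orient c d (pscale sg (psub (line_pt a b t) y)) =
  orient c d (pscale sg (psub (v a) y)) +
    t * cross (psub (v d) (v c)) (pscale sg (psub (v b) (v a))).
Proof. rewrite /orient /cross /=; ring. Qed.

Lemma orient_eq0_line a b y : v a != v b -> orient a b y = 0 ->
  exists t, y = line_pt a b t.
Proof.
case: y => y1 y2; rewrite /orient /cross /line_pt /=.
case: (v a) (v b) => [a1 a2] [b1 b2] /= nab h0.
have nd : (b1 - a1) ^+ 2 + (b2 - a2) ^+ 2 != 0.
  apply: contra nab; rewrite paddr_eq0 ?sqr_ge0 // !sqrf_eq0 !subr_eq0.
  by case/andP => /eqP -> /eqP ->.
exists (((y1 - a1) * (b1 - a1) + (y2 - a2) * (b2 - a2)) /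
        ((b1 - a1) ^+ 2 + (b2 - a2) ^+ 2)).
congr pair; apply: (mulIf nd); rewrite mulrDl [_ / _ * _ * _]mulrAC divfK //;
  apply/eqP; rewrite -subr_eq0; apply/eqP.
- by rewrite /= -[RHS](mulr0 (- (b2 - a2))) -h0; ring.
- by rewrite /= -[RHS](mulr0 (b1 - a1)) -h0; ring.
Qed.

Lemma inX_inj a a' y : inX v a y -> inX v a' y -> a = a'.
Proof.
move=> ha ha'; apply/eqP/negPn/negP => neq.
have h : 0 < orient a a' y by apply: ha; rewrite eq_sym.
have : 0 < orient a' a y by apply: ha'.
by rewrite orientC oppr_gt0 ltNge (ltW h).
Qed.

(* T_a z = T_a' z' means z' = z + 2 (v_a' - v_a): a shift along the line
   through v_a and v_a', which does not change the orientation of z. *)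
Lemma prefl_inX_inj a a' z z' : inX v a z -> inX v a' z' ->
  prefl (v a) z = prefl (v a') z' -> a = a'.
Proof.
move=> ha ha' e; apply/eqP/negPn/negP => neq.
have ez' : z' = pshift z 2 (psub (v a') (v a)).
  apply: pt_coordP => i; move/(congr1 (coord i)): e.
  rewrite coord_pshift !coord_prefl coord_psub; lra.
have h : 0 < orient a a' z by apply: ha; rewrite eq_sym.
have flat : cross (psub (v a) (v a')) (psub (v a') (v a)) = 0.
  by rewrite /cross /=; ring.
have : 0 < orient a' a z' by apply: ha'.
by rewrite ez' orient_pshift flat mulr0 addr0 orientC oppr_gt0 ltNge (ltW h).
Qed.

Lemma eq_orb x s s' k : (forall i, (i < k)%N -> s i = s' i) ->
  orb v x s k = orb v x s' k.
Proof.
elim: k => [//|k IH] e /=.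
by rewrite e // IH // => i ik; apply: e; apply: ltnW.
Qed.

Lemma orbD x s k m :
  orb v x s (k + m) = orb v (orb v x s k) (fun i => s (k + i)%N) m.
Proof. by elim: m => [|m IH]; rewrite ?addn0 // addnS /= IH. Qed.

Lemma coord_orb i x s k :
  coord i (orb v x s k) = (-1) ^+ k * coord i x + coord i (orb v (0, 0) s k).
Proof.
elim: k => [|k IH] /=; first by rewrite coord0 expr0 mul1r addr0.
by rewrite !coord_prefl IH exprS; ring.
Qed.

Lemma orb_pshift x s k t w :
  orb v (pshift x t w) s k = pshift (orb v x s k) ((-1) ^+ k * t) w.
Proof.
apply: pt_coordP => i.
by rewrite (coord_orb i (pshift x t w)) !coord_pshift (coord_orb i x); ring.
Qed.

Lemma orient_orb_seg c d x x' s k l :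
  orient c d (orb v (pshift x l (psub x' x)) s k) =
  (1 - l) * orient c d (orb v x s k) + l * orient c d (orb v x' s k).
Proof.
have ex' : x' = pshift x 1 (psub x' x).
  by apply: pt_coordP => i; rewrite coord_pshift coord_psub; ring.
by rewrite [in orb v x' s k]ex' !orb_pshift !orient_pshift; ring.
Qed.

Lemma orb_back y s k m :
  orb v y s k = pscale ((-1) ^+ m)
    (psub (orb v y s (k + m)) (orb v (0, 0) (fun i => s (k + i)%N) m)).
Proof.
apply: pt_coordP => i.
by rewrite coord_pscale coord_psub orbD (coord_orb i (orb v y s k)) addrK
  mulrA -expr2 sqrr_sign mul1r.
Qed.

Lemma orb_pscale_back z s n :
  orb v (pscale ((-1) ^+ n) (psub z (orb v (0, 0) s n))) s n = z.
Proof.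
apply: pt_coordP => i.
by rewrite coord_orb coord_pscale coord_psub mulrA -expr2 sqrr_sign mul1r subrK.
Qed.

Definition follows n s x := forall k, (k < n)%N -> inX v (s k) (orb v x s k).

Lemma eq_follows n s s' x : (forall k, (k < n)%N -> s k = s' k) ->
  follows n s x -> follows n s' x.
Proof.
move=> e fx k kn.
have -> : orb v x s' k = orb v x s k.
  by apply: eq_orb => i ik; rewrite e // (ltn_trans ik kn).
by rewrite -e //; apply: fx.
Qed.

Lemma follows_orb_inj n s s' x x' : follows n s x -> follows n s' x' ->
  orb v x s n = orb v x' s' n -> forall k, (k < n)%N -> s k = s' k.
Proof.
elim: n x x' => [//|n IH] x x' fx fx' /= e.
have en := prefl_inX_inj (fx n (ltnSn n)) (fx' n (ltnSn n)) e.
move: e; rewrite en => /prefl_inj e k; rewrite ltnS leq_eqVlt => /predU1P[-> //|kn].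
by apply: (IH x x') => // j jn; [apply: fx | apply: fx']; apply: ltnW.
Qed.

Lemma follows_seg n s x x' l : 0 <= l <= 1 ->
  follows n s x -> follows n s x' -> follows n s (pshift x l (psub x' x)).
Proof.
move=> /andP[l0 l1] fx fx' k kn c nc.
have h : 0 < orient (s k) c (orb v x s k) by apply: fx.
have h' : 0 < orient (s k) c (orb v x' s k) by apply: fx'.
suff : 0 < orient (s k) c (orb v (pshift x l (psub x' x)) s k) by [].
rewrite orient_orb_seg; nra.
Qed.

Lemma follows_hit_line n s x x' a a' :
  follows n s x -> follows n s x' -> a != a' ->
  inX v a (orb v x s n) -> inX v a' (orb v x' s n) ->
  exists b t x'', follows n s x'' /\ orb v x'' s n = line_pt a b t.
Proof.
move=> fx fx' neq ha ha'.
set y := orb v x s n; set y' := orb v x' s n.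
have [b [nb le0]] : exists b, b != a /\ orient a b y' <= 0.
  apply: contrapT => none; move/eqP: neq; apply; apply: inX_inj ha'.
  by move=> b nb; rewrite ltNge; apply/negP => le0; apply: none; exists b.
have g0 : 0 < orient a b y by apply: ha.
have dpos : 0 < orient a b y - orient a b y' by lra.
pose l := orient a b y / (orient a b y - orient a b y').
have l01 : 0 <= l <= 1.
  apply/andP; split; first by apply: divr_ge0; lra.
  by rewrite ler_pdivrMr // mul1r; lra.
have hit : orient a b (orb v (pshift x l (psub x' x)) s n) = 0.
  by rewrite orient_orb_seg -/y -/y' /l; field; apply: lt0r_neq0.
have nab : v a != v b.
  by apply: contraTneq g0 => eab; rewrite /orient eab /cross mulrC subrr ltxx.
have [t ht] := orient_eq0_line nab hit.
by exists b, t, (pshift x l (psub x' x)); split => //; apply: follows_seg.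
Qed.

(* The default [a] of [nth a u] only matters beyond the first n steps,
   which play no role. *)
Definition hits n a b (u : n.-tuple 'I_p) t : Prop :=
  exists x, follows n (nth a u) x /\ orb v x (nth a u) n = line_pt a b t.

Definition hit_codes n a b : {set n.-tuple 'I_p} :=
  [set u | `[< exists t, hits a b u t >]].

End Billiard.

Section Rank.
Variables (R : realType) (p : nat) (t : 'I_p -> pt R).

Lemma group_rank_attained : exists2 S, zindep t S & #|S| = group_rank t.
Proof.
have ne : (0 < #|[pred S : {set 'I_p} | `[< zindep t S >]]|)%N.
  by apply/card_gt0P; exists set0; rewrite inE; apply/asboolP => c _ _ i; rewrite inE.
have [S indS eS] := eq_bigmax_cond (fun S : {set 'I_p} => #|S|) ne.
by exists S; [move: indS; rewrite inE => /asboolP | rewrite /group_rank eS].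
Qed.

Lemma group_rank_ge S : zindep t S -> (#|S| <= group_rank t)%N.
Proof.
move=> indS; apply: (@leq_bigmax_cond _ (fun S => `[< zindep t S >]) (fun S => #|S|)).
exact/asboolP.
Qed.

Lemma group_rank_spanning : exists S : {set 'I_p}, #|S| = group_rank t /\
  forall j, exists2 d : int, d != 0 & exists e : 'I_p -> int,
    forall i, d%:~R * coord i (t j) = \sum_(k in S) (e k)%:~R * coord i (t k).
Proof.
have [S indS eS] := group_rank_attained.
exists S; split => // j.
case: (boolP (j \in S)) => jS.
  exists 1 => //; exists (fun k => (k == j)%:Z) => i.
  rewrite (bigD1 j) //= eqxx mul1r big1 ?addr0 // => k /andP[_ /negbTE ->].
  by rewrite mul0r.
have dep : ~ zindep t (j |: S) by move/group_rank_ge; rewrite -eS cardsU1 jS ltnn.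
have [c [c1 c2 cj]] : exists c : 'I_p -> int,
    [/\ \sum_(k in j |: S) (c k)%:~R * (t k).1 = 0,
        \sum_(k in j |: S) (c k)%:~R * (t k).2 = 0 & c j != 0].
  apply: contrapT => none; apply: dep => c c1 c2.
  have cj0 : c j = 0 by apply: contrapT => /eqP cj; apply: none; exists c.
  move: c1 c2; rewrite !big_setU1 //= cj0 !mul0r !add0r => c1 c2 k.
  by case/setU1P => [-> //|kS]; apply: indS c1 c2 k kS.
exists (c j) => //; exists (fun k => - c k) => i.
have : \sum_(k in j |: S) (c k)%:~R * coord i (t k) = 0 by case: i.
rewrite big_setU1 //= => /eqP; rewrite addr_eq0 => /eqP ->.
by rewrite -sumrN; apply: eq_bigr => k _; rewrite intrN mulNr.
Qed.

Lemma common_denominator (S : {set 'I_p}) :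
  (forall j, exists2 d : int, d != 0 & exists e : 'I_p -> int,
     forall i, d%:~R * coord i (t j) = \sum_(k in S) (e k)%:~R * coord i (t k)) ->
  exists2 D : int, D != 0 & exists f : 'I_p -> 'I_p -> int,
    forall j i, D%:~R * coord i (t j) = \sum_(k in S) (f j k)%:~R * coord i (t k).
Proof.
move=> span.
have span' j : exists de : int * ('I_p -> int), de.1 != 0 /\
    forall i, de.1%:~R * coord i (t j) = \sum_(k in S) (de.2 k)%:~R * coord i (t k).
  by have [d d0 [e de]] := span j; exists (d, e).
have [de deP] := choice span'.
exists (\prod_j (de j).1); first by apply/prodf_neq0 => j _; case: (deP j).
exists (fun j k => (\prod_(m | m != j) (de m).1) * (de j).2 k) => j i.
have [_ eq_j] := deP j.
rewrite (bigD1 j) //= intrM [_%:~R * _%:~R]mulrC -mulrA eq_j mulr_sumr.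
by apply: eq_bigr => k _; rewrite intrM mulrA.
Qed.

End Rank.

Section Lattice.
Variables (R : realType) (p : nat) (v : 'I_p -> pt R).
Hypothesis p_gt0 : (0 < p)%N.
Let o : 'I_p := Ordinal p_gt0.
Local Notation tr := (side_transl v).

Lemma coord_side_transl i j :
  coord i (tr j) = 2 * coord i (v j) - 2 * coord i (v (nxt j)).
Proof. by case: i. Qed.

Lemma vertex_side_sum i a :
  2 * coord i (v a) = 2 * coord i (v o) - \sum_(j < p | (j < a)%N) coord i (tr j).
Proof.
case: a => a ha; elim: a ha => [|a IH] ha.
  by rewrite big_pred0 ?subr0 //; congr (2 * coord i (v _)); apply: val_inj.
have ha' : (a < p)%N by apply: ltnW.
have nxt_a : nxt (Ordinal ha') = Ordinal ha by apply: val_inj; rewrite /= modn_small.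
rewrite (bigD1 (Ordinal ha')) //= (eq_bigl (fun j : 'I_p => (j < a)%N)); last first.
  by move=> j; rewrite ltnS -val_eqE /= andbC -ltn_neqAle.
by rewrite coord_side_transl nxt_a (IH ha'); ring.
Qed.

Lemma orb0_int_comb m s : exists K : 'I_p -> int,
  (forall j, - (m%:Z) <= K j <= m%:Z) /\
  forall i, coord i (orb v (0, 0) s m) =
    (odd m)%:R * (2 * coord i (v o)) + \sum_j (K j)%:~R * coord i (tr j).
Proof.
elim: m => [|m [K [K_le K_eq]]].
  exists (fun=> 0); split => // i.
  by rewrite big1 ?mul0r ?addr0 ?coord0 // => j _; rewrite mul0r.
exists (fun j => - K j - (j < s m)%N%:Z); split.
  by move=> j; have := K_le j; case: (j < s m)%N => /=; lia.
move=> i; rewrite /= coord_prefl K_eq (vertex_side_sum i (s m)).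
have -> : \sum_j (- K j - (j < s m)%N%:Z)%:~R * coord i (tr j) =
    - \sum_j (K j)%:~R * coord i (tr j) - \sum_(j < p | (j < s m)%N) coord i (tr j).
  rewrite -sumrN [X in _ - X]big_mkcond -sumrB; apply: eq_bigr => j _.
  by rewrite intrD intrN; case: (j < s m)%N => /=; ring.
by case: (odd m) => /=; ring.
Qed.

Section Basis.
Variables (S : {set 'I_p}) (D : int) (f : 'I_p -> 'I_p -> int).
Hypothesis D_neq0 : D != 0.
Hypothesis D_comb : forall j i,
  D%:~R * coord i (tr j) = \sum_(k in S) (f j k)%:~R * coord i (tr k).

Definition comb_bound : int := \sum_j \sum_k `|f j k|.

Lemma orb0_basis_comb m s : exists c : 'I_p -> int,
  (forall k, `|c k| <= m%:Z * comb_bound) /\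
  forall i, D%:~R * coord i (orb v (0, 0) s m) =
    (odd m)%:R * (2 * (D%:~R * coord i (v o))) +
    \sum_(k in S) (c k)%:~R * coord i (tr k).
Proof.
have [K [K_le K_eq]] := orb0_int_comb m s.
exists (fun k => \sum_j K j * f j k); split.
  move=> k; apply: le_trans (ler_norm_sum _ _ _) _.
  apply: le_trans (_ : \sum_j m%:Z * `|f j k| <= _).
    by apply: ler_sum => j _; rewrite normrM ler_wpM2r // ler_norml.
  rewrite -mulr_sumr ler_wpM2l //; apply: ler_sum => j _.
  by rewrite (bigD1 k) //= lerDl sumr_ge0.
move=> i; rewrite K_eq mulrDr; congr (_ + _); first ring.
rewrite mulr_sumr (eq_bigr (fun j => (K j)%:~R * (D%:~R * coord i (tr j)))); last first.
  by move=> j _; rewrite mulrCA.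
rewrite (eq_bigr (fun j =>
  \sum_(k in S) (K j)%:~R * ((f j k)%:~R * coord i (tr k)))); last first.
  by move=> j _; rewrite D_comb mulr_sumr.
rewrite exchange_big /=; apply: eq_bigr => k _.
by rewrite rmorph_sum mulr_suml; apply: eq_bigr => j _; rewrite mulrA -intrM.
Qed.

Definition lattice_radius n : nat := (n * `|comb_bound|%N)%N.

(* A parity and, for each basis translation, an integer coefficient in
   [-lattice_radius n, lattice_radius n], stored shifted by lattice_radius n. *)
Definition lattice_idx n :=
  (bool * {ffun 'I_#|S| -> 'I_(2 * lattice_radius n).+1})%type.

Definition lattice_coord n (q : lattice_idx n) (i : bool) : R :=
  (D%:~R)^-1 * (q.1%:R * (2 * (D%:~R * coord i (v o))) +
    \sum_(j < #|S|) ((q.2 j : nat)%:Z - (lattice_radius n)%:Z)%:~R *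
       coord i (tr (enum_val j))).

Definition lattice_pt n (q : lattice_idx n) : pt R :=
  (lattice_coord q false, lattice_coord q true).

Lemma coord_lattice_pt n (q : lattice_idx n) i :
  coord i (lattice_pt q) = lattice_coord q i.
Proof. by case: i. Qed.

Lemma orb0_in_lattice n m s : (m <= n)%N ->
  exists q : lattice_idx n, orb v (0, 0) s m = lattice_pt q.
Proof.
move=> mn; have [c [c_le c_eq]] := orb0_basis_comb m s.
set M := lattice_radius n.
have cb0 : 0 <= comb_bound by apply: sumr_ge0 => j _; apply: sumr_ge0.
have c_in k : - M%:Z <= c k <= M%:Z.
  rewrite -ler_norml (le_trans (c_le k)) // /M /lattice_radius PoszM.
  by rewrite gez0_abs // ler_wpM2r // lez_nat.
have c_lt k : (absz (c k + M%:Z)%R < (2 * M).+1)%N.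
  by have := c_in k; lia.
exists (odd m, [ffun j => Ordinal (c_lt (enum_val j))]).
have D0 : (D%:~R : R) != 0 by rewrite intr_eq0.
apply: pt_coordP => i; rewrite coord_lattice_pt; apply: (mulfI D0).
rewrite mulVKf // c_eq /=; congr (_ + _); rewrite big_enum_val; apply: eq_bigr => j _.
by rewrite ffunE /= gez0_abs ?addrK //; have := c_in (enum_val j); lia.
Qed.


Definition cut_idx n := ('I_p * 'I_p * bool * lattice_idx n)%type.

(* Zero of the affine function t |-> orient c d y_t, where y_t is the point
   (-1)^sg (line_pt a b t - lattice_pt q). *)
Definition cut n a b (g : cut_idx n) : R :=
  let: (c, d, sg, q) := g in
  - orient v c d (pscale ((-1) ^+ sg) (psub (v a) (lattice_pt q))) /
    cross (psub (v d) (v c)) (pscale ((-1) ^+ sg) (psub (v b) (v a))).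

Lemma hits_left_closed n a b (u : n.-tuple 'I_p) t t' : t < t' ->
  hits v a b u t' -> (forall g : cut_idx n, ~~ (t <= cut a b g < t')) ->
  hits v a b u t.
Proof.
move=> tt' [x' [fx' ex']] nocut.
set s := nth a u in fx' ex' *.
set x := pscale ((-1) ^+ n) (psub (line_pt v a b t) (orb v (0, 0) s n)).
exists x; split; last exact: orb_pscale_back.
move=> k kn c nc.
have [q eq] := orb0_in_lattice (fun i => s (k + i)%N) (leq_subr k n).
have back y : orb v y s k =
    pscale ((-1) ^+ odd (n - k)) (psub (orb v y s n) (lattice_pt q)).
  by rewrite signr_odd (orb_back v y s k (n - k)) subnKC ?eq // ltnW.
have pos' : 0 < orient v (s k) c (orb v x' s k) by apply: fx'.
suff : 0 < orient v (s k) c (orb v x s k) by [].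
move: pos'; rewrite !back ex' orb_pscale_back !orient_back_line => pos'.
exact: gt0_affine_left tt' pos' (nocut (s k, c, odd (n - k), q)).
Qed.

Lemma card_hit_codes n a b : (#|hit_codes v n a b| <= #|{: cut_idx n}|.+1)%N.
Proof.
apply: (card_disjoint_left_closed (J := hits v a b) (cut := cut a b)).
- move=> u u' t _ _ [x [fx ex]] [x' [fx' ex']].
  apply: eq_from_tnth => i; rewrite !(tnth_nth a).
  exact: follows_orb_inj fx fx' (etrans ex (esym ex')) i (ltn_ord i).
- by move=> u; rewrite inE => /asboolP.
- by move=> u t t' _; apply: hits_left_closed.
Qed.

Lemma card_hit_codes_poly :
  exists B, forall n a b, (#|hit_codes v n a b| <= B * n.+1 ^ #|S|)%N.
Proof.
exists (p * p * 2 * (2 * (2 * `|comb_bound|%N).+1 ^ #|S|)).+1 => n a b.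
apply: leq_trans (card_hit_codes n a b) _.
rewrite !card_prod card_bool card_ffun !card_ord [X in (_ <= X)%N]mulSn -add1n.
rewrite leq_add ?expn_gt0 //.
have base : ((2 * lattice_radius n).+1 <= (2 * `|comb_bound|%N).+1 * n.+1)%N.
  by rewrite /lattice_radius; nia.
have pow : ((2 * lattice_radius n).+1 ^ #|S| <=
    (2 * `|comb_bound|%N).+1 ^ #|S| * n.+1 ^ #|S|)%N.
  by rewrite -expnMn; case: #|S| => [|r]; rewrite ?expn0 ?leq_exp2r.
by rewrite -!mulnA !leq_mul2l pow !orbT.
Qed.

End Basis.

End Lattice.

Definition prefix (T : Type) n (w : n.+1.-tuple T) : n.-tuple T :=
  [tuple tnth w (widen_ord (leqnSn n) i) | i < n].

Lemma prefix_last_inj (T : Type) n :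
  injective (fun w : n.+1.-tuple T => (prefix w, tnth w ord_max)).
Proof.
move=> w w' e; have /= ep := congr1 fst e; have /= el := congr1 snd e.
apply: eq_from_tnth => i; case: (ltnP i n) => [lt_in|le_ni].
  have := congr1 (fun u => tnth u (Ordinal lt_in)) ep; rewrite !tnth_mktuple.
  by have -> : widen_ord (leqnSn n) (Ordinal lt_in) = i by apply: val_inj.
have -> : i = ord_max by apply: val_inj; apply/eqP; rewrite eqn_leq le_ni -ltnS ltn_ord.
exact: el.
Qed.

Section Codes.
Variables (R : realType) (p : nat) (v : 'I_p -> pt R).

Lemma codesP n (w : n.-tuple 'I_p) : w \in codes v n <->
  exists x s, itinerary v x s /\ forall i : 'I_n, tnth w i = s i.
Proof. by rewrite inE; split => /asboolP. Qed.

Lemma prefix_codes n (w : n.+1.-tuple 'I_p) :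
  w \in codes v n.+1 -> prefix w \in codes v n.
Proof.
case/codesP => x [s [itx ws]]; apply/codesP; exists x, s; split => // i.
by rewrite tnth_mktuple ws.
Qed.

Lemma codes_branch n (w w' : n.+1.-tuple 'I_p) :
  w \in codes v n.+1 -> w' \in codes v n.+1 -> prefix w = prefix w' -> w != w' ->
  exists a b, prefix w \in hit_codes v n a b.
Proof.
move=> /codesP[x [s [itx ws]]] /codesP[x' [s' [itx' ws']]] epre neq.
have agree k : (k < n)%N -> s k = s' k.
  move=> kn; have := congr1 (fun u => tnth u (Ordinal kn)) epre.
  by rewrite !tnth_mktuple ws ws'.
have last_neq : s n != s' n.
  apply: contra neq => /eqP elast; apply/eqP/prefix_last_inj.
  by congr pair; rewrite // ws ws' /= elast.
have fx : follows v n s x by move=> k _; apply: itx.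
have fx' : follows v n s x'.
  by apply: (eq_follows (s := s')) => [k /agree -> //|k _]; apply: itx'.
have hx' : inX v (s' n) (orb v x' s n) by rewrite (eq_orb v x' agree); apply: itx'.
have [b [t [x'' [fx'' ex'']]]] := follows_hit_line fx fx' last_neq (itx n) hx'.
have code k : (k < n)%N -> s k = nth (s n) (prefix w) k.
  by move=> kn; rewrite -(tnth_nth _ _ (Ordinal kn)) tnth_mktuple ws.
exists (s n), b; rewrite inE; apply/asboolP; exists t, x''; split.
  exact: eq_follows code fx''.
by rewrite -(eq_orb v x'' code).
Qed.

Lemma complexity_succ n : (complexity v n.+1 <=
  complexity v n + p * \sum_(ab : 'I_p * 'I_p) #|hit_codes v n ab.1 ab.2|)%N.
Proof.
set H := \bigcup_(ab : 'I_p * 'I_p) hit_codes v n ab.1 ab.2.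
set B := [set w : n.+1.-tuple 'I_p | prefix w \in H].
rewrite /complexity -(cardsID B (codes v n.+1)) addnC leq_add //.
  have inj : {in codes v n.+1 :\: B &, injective (@prefix _ n)}.
    move=> w w' /setDP[wC wB] /setDP[w'C _] epre; apply/eqP; apply: contraNT wB => neq.
    have [a [b hab]] := codes_branch wC w'C epre neq.
    by rewrite inE; apply/bigcupP; exists (a, b).
  rewrite -(card_in_imset inj); apply: subset_leq_card.
  by apply/subsetP => _ /imsetP[w /setDP[wC _] ->]; apply: prefix_codes.
rewrite -(card_imset _ (@prefix_last_inj _ n)) mulnC.
apply: leq_trans (subset_leq_card (_ : _ \subset setX H [set: 'I_p])) _.
  apply/subsetP => y /imsetP[w /setIP[_ wB] ->].
  by rewrite inE in wB; rewrite !inE wB.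
by rewrite cardsX cardsT card_ord leq_mul2r card_bigcup_leq orbT.
Qed.

End Codes.

Lemma complexity_le_pow (R : realType) (p : nat) (v : 'I_p -> pt R) : (0 < p)%N ->
  exists K : nat, forall n, (complexity v n <= 1 + K * n ^ (transl_rank v).+1)%N.
Proof.
move=> p_gt0.
have [S [cardS span]] := group_rank_spanning (side_transl v).
have [D D0 [f Df]] := common_denominator span.
have [B hitB] := card_hit_codes_poly p_gt0 D0 Df.
exists (p * (p * p * B))%N => n.
have step m : (complexity v m.+1 <=
    complexity v m + p * (p * p * B) * m.+1 ^ #|S|)%N.
  apply: leq_trans (complexity_succ v m) _; rewrite leq_add2l -!mulnA leq_mul2l.
  apply/orP; right; apply: (@leq_trans (\sum_(ab : 'I_p * 'I_p) B * m.+1 ^ #|S|)).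
    by apply: leq_sum => ab _; apply: hitB.
  rewrite sum_nat_const [X in (_ <= X)%N]mulnA leq_mul2r; apply/orP; right.
  by rewrite -[X in (X <= _)%N]/#|{: ('I_p * 'I_p)%type}| card_prod card_ord.
have f0 : (complexity v 0 <= 1)%N.
  by rewrite /complexity (leq_trans (max_card _)) // card_tuple.
by rewrite /transl_rank -cardS (leq_trans (leq_pow_increments step n)) // leq_add2r.
Qed.

Theorem mainTheorem13 (R : realType) (p : nat) (v : 'I_p -> pt R) :
  (3 <= p)%N -> convex_ccw v ->
  exists (C : R) (N : nat), forall n : nat, (N <= n)%N ->
    (complexity v n)%:R <= C * (n%:R) ^+ (transl_rank v + 2).
Proof.
move=> p_ge3 _.
have p_gt0 : (0 < p)%N by apply: leq_trans p_ge3.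
have [K bound] := complexity_le_pow v p_gt0.
exists (1 + K)%:R, 1%N => n n_gt0.
rewrite -natrX -natrM ler_nat (leq_trans (bound n)) // mulnDl mul1n.
by rewrite leq_add ?expn_gt0 ?n_gt0 // leq_mul2l leq_pexp2l ?orbT // addn2.
Qed.
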